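(* Let $D=(V,A)$ be a digraph, let $C\subseteq V$ be a clique-cutset of $D$, and let $B,B'$ be a bipartition of $V\setminus C$ such that $B$ is the vertex set of a connected component of $D[V\setminus C]$. Suppose there exist subsets $K_1,\dots,K_{|C|+1}$ of $V$ such that for every $i\in\{1,\ldots,|C|+1\}$, $K_i$ is a kernel of $D\left[B\cup\left(C\setminus\bigcup_{j=1}^{i-1}K_j\right)\right]$, and suppose that $D\left[B'\cup\left(C\cap\bigcup_{j=1}^{|C|}K_j\right)\right]$ has a kernel $K$. Then there exists $i\in\{1,\ldots,|C|+1\}$ such that $K\cup K_i$ is a kernel of $D$.
   Context: For a digraph $D=(V,A)$, $D[W]$ denotes the subdigraph induced by $W\subseteq V$. A set $S\subseteq V$ is stable if no two vertices of $S$ are adjacent (joined by an arc in either direction), and absorbing if for every $u\in V\setminus S$ there is $v\in S$ with $(u,v)\in A$; a kernel is a set that is both stable and absorbing. A clique-cutset of $D$ is a set $C\subseteq V$ such that the vertices of $C$ are pairwise adjacent and $D[V\setminus C]$ is disconnected. *)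

From mathcomp Require Import all_boot.
Set Implicit Arguments. Unset Strict Implicit. Unset Printing Implicit Defensive.

Section Digraph.
Variables (T : finType) (A : rel T).

Definition adjacent (u v : T) : bool := (u != v) && (A u v || A v u).

Definition stable (S : {set T}) : Prop :=
  forall u v, u \in S -> v \in S -> ~~ adjacent u v.

(* S is a kernel of the induced subdigraph D[W] *)
Definition kernel_in (W S : {set T}) : Prop :=
  [/\ S \subset W, stable S &
      forall u, u \in W -> u \notin S -> exists2 v, v \in S & A u v].

Definition kernel (S : {set T}) : Prop := kernel_in [set: T] S.

Definition clique (C : {set T}) : Prop :=
  forall u v, u \in C -> v \in C -> u != v -> adjacent u v.

Definition induced_adj (W : {set T}) : rel T :=
  fun u v => [&& u \in W, v \in W & adjacent u v].

Definition disconnected_in (W : {set T}) : Prop :=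
  exists x y, [/\ x \in W, y \in W & ~~ connect (induced_adj W) x y].

Definition clique_cutset (C : {set T}) : Prop :=
  clique C /\ disconnected_in (~: C).

Definition component_of (W B : {set T}) : Prop :=
  exists2 x, x \in W &
    B = [set y | (y \in W) && connect (induced_adj W) x y].

End Digraph.

(* The key is an index i for which K and K_i meet the clique C in the same set
   (of size at most one, as a stable set meets a clique at most once).  If K
   contains c in C, then c lies in K_i for some i <= |C|, and K_i meets C in c
   alone; otherwise the sets K_i :&: C are pairwise disjoint subsets of C, so
   one of the |C| + 1 of them is empty.  Outside C, K lies in B' and K_i in B,
   and no arc joins B to B', so K :|: K_i is stable; it is absorbing because
   the domains of K and K_i cover all vertices. *)
From mathcomp Require Import all_boot.

Set Implicit Arguments.
Unset Strict Implicit.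
Unset Printing Implicit Defensive.

Section NatIndexedUnions.
Variable T : finType.
Implicit Types (F : nat -> {set T}) (x : T).

Lemma bigcup_natP F m n x :
  reflect (exists2 j, m <= j < n & x \in F j) (x \in \bigcup_(m <= j < n) F j).
Proof.
have -> : (x \in \bigcup_(m <= j < n) F j) = has (fun j => x \in F j) (index_iota m n).
  by elim: (index_iota m n) => [|j s IH]; rewrite ?big_nil ?big_cons inE ?IH.
by apply: (iffP hasP) => -[j]; rewrite ?mem_index_iota => range_j xFj; exists j;
  rewrite ?mem_index_iota.
Qed.

Lemma bigcup_nat_subset F m n n' :
  n <= n' -> \bigcup_(m <= j < n) F j \subset \bigcup_(m <= j < n') F j.
Proof.
move=> le_nn'; apply/subsetP => x /bigcup_natP[j /andP[le_mj lt_jn] xFj].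
by apply/bigcup_natP; exists j; rewrite ?le_mj ?(leq_trans lt_jn).
Qed.

Lemma bigcup_nat_disjoint_card F n :
  (forall i, 1 <= i <= n -> [disjoint F i & \bigcup_(1 <= j < i) F j]) ->
  (exists2 i, 1 <= i <= n & F i = set0) \/ n <= #|\bigcup_(1 <= j < n.+1) F j|.
Proof.
elim: n => [|n IH] disF; first by right.
have disF' i : 1 <= i <= n -> [disjoint F i & \bigcup_(1 <= j < i) F j].
  by case/andP=> i_gt0 le_in; rewrite disF // i_gt0 leqW.
have [[i /andP[i_gt0 le_in] Fi0]|le_n_card] := IH disF'.
  by left; exists i; rewrite ?i_gt0 ?leqW.
have [Fn0|[x xFn]] := set_0Vmem (F n.+1); first by left; exists n.+1; rewrite ?leqnn.
right; rewrite big_nat_recr //= cardsU.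
have /disjoint_setI0 -> : [disjoint \bigcup_(1 <= j < n.+1) F j & F n.+1].
  by rewrite disjoint_sym; apply: disF; rewrite /= leqnn.
rewrite cards0 subn0 addnC -add1n leq_add //.
by rewrite card_gt0; apply/set0Pn; exists x.
Qed.

Lemma bigcup_nat_pigeonhole (B C : {set T}) F :
  [disjoint B & C] ->
  (forall i, 1 <= i <= #|C|.+1 ->
     F i \subset B :|: (C :\: \bigcup_(1 <= j < i) F j)) ->
  exists2 i, 1 <= i <= #|C|.+1 & F i :&: C = set0.
Proof.
move=> disBC sF.
have disFC i : 1 <= i <= #|C|.+1 ->
    [disjoint F i :&: C & \bigcup_(1 <= j < i) (F j :&: C)].
  move=> range_i; rewrite disjoint_subset; apply/subsetP => x /setIP[xFi xC].
  rewrite inE; apply/bigcup_natP => -[j range_j /setIP[xFj _]].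
  move: (subsetP (sF i range_i) x xFi); rewrite !inE (disjointFl disBC xC) /=.
  by case/andP=> /bigcup_natP[]; exists j.
have [//|] := bigcup_nat_disjoint_card disFC.
rewrite ltnNge => /negP[]; apply: subset_leq_card.
by apply/subsetP => x /bigcup_natP[j _ /setIP[]].
Qed.

End NatIndexedUnions.

Section Kernels.
Variables (T : finType) (A : rel T).
Implicit Types (B C S W : {set T}).

Lemma adjacentC u v : adjacent A u v = adjacent A v u.
Proof. by rewrite /adjacent eq_sym orbC. Qed.

Lemma stable_setU S S' :
  stable A S -> stable A S' ->
  (forall u v, u \in S -> v \in S' -> ~~ adjacent A u v) ->
  stable A (S :|: S').
Proof.
move=> stS stS' cross u v /setUP[uS|uS'] /setUP[vS|vS'].
- exact: stS.
- exact: cross.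
- by rewrite adjacentC; apply: cross.
- exact: stS'.
Qed.

Lemma kernel_setU W W' S S' :
  kernel_in A W S -> kernel_in A W' S' -> W :|: W' = [set: T] ->
  stable A (S :|: S') -> kernel A (S :|: S').
Proof.
move=> [_ _ absS] [_ _ absS'] covW stSS'; split=> [||u _]; [exact: subsetT | exact: stSS' |].
rewrite inE negb_or => /andP[uS uS'].
have : u \in W :|: W' by rewrite covW inE.
case/setUP=> [uW|uW'].
- by have [v vS uv] := absS u uW uS; exists v; rewrite ?inE ?vS.
- by have [v vS' uv] := absS' u uW' uS'; exists v; rewrite ?inE ?vS' ?orbT.
Qed.

Lemma stable_cliqueI S C c :
  stable A S -> clique A C -> c \in S -> c \in C -> S :&: C = [set c].
Proof.
move=> stS clC cS cC; apply/setP => u; rewrite !inE.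
apply/andP/eqP => [[uS uC]|->]; last by [].
apply/eqP; apply: contraT => neq_uc.
by have := stS u c uS cS; rewrite clC.
Qed.

Lemma component_not_adjacent W B b u :
  component_of A W B -> b \in B -> u \in W -> u \notin B -> ~~ adjacent A b u.
Proof.
move=> [x _ ->]; rewrite !inE => /andP[bW xb] uW; apply: contra => bu.
by rewrite uW (connect_trans xb) // connect1 // /induced_adj bW uW.
Qed.

Lemma stable_setU_separated B B' C S S' :
  (forall b b', b \in B -> b' \in B' -> ~~ adjacent A b b') ->
  S \subset B' :|: C -> S' \subset B :|: C -> S :&: C = S' :&: C ->
  stable A S -> stable A S' -> stable A (S :|: S').
Proof.
move=> sepBB' sS sS' eqSC stS stS'; apply: stable_setU => // u v uS vS'.
have [uC|uC] := boolP (u \in C).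
  by apply: stS'; rewrite // -[u \in S']andbT -uC -in_setI -eqSC inE uS.
have [vC|vC] := boolP (v \in C).
  by apply: stS; rewrite // -[v \in S]andbT -vC -in_setI eqSC inE vS'.
move/subsetP/(_ u uS): sS; move/subsetP/(_ v vS'): sS'.
rewrite !inE (negbTE uC) (negbTE vC) !orbF => vB uB'.
by rewrite adjacentC sepBB'.
Qed.

Section CutsetSides.
Variables (B B' C : {set T}) (Ks : nat -> {set T}).
Hypothesis covB : B :|: B' = ~: C.
Hypothesis kerKs : forall i, 1 <= i <= #|C|.+1 ->
  kernel_in A (B :|: (C :\: \bigcup_(1 <= j < i) Ks j)) (Ks i).

Lemma disjoint_cutset_sides : [disjoint B & C] /\ [disjoint B' & C].
Proof. by rewrite !disjoints_subset -covB subsetUl subsetUr. Qed.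

Lemma cutset_sides_cover i : 1 <= i <= #|C|.+1 ->
  (B' :|: (C :&: \bigcup_(1 <= j < #|C|.+1) Ks j)) :|:
  (B :|: (C :\: \bigcup_(1 <= j < i) Ks j)) = [set: T].
Proof.
case/andP=> _ le_i; apply/setP => u; rewrite !inE; have [uC|uC] /= := boolP (u \in C).
  have [uUi|] := boolP (u \in \bigcup_(1 <= j < i) Ks j); last by rewrite !orbT.
  by rewrite (subsetP (bigcup_nat_subset _ _ le_i) u uUi) orbT.
by have := uC; rewrite -in_setC -covB inE => /orP[->|->]; rewrite ?orbT.
Qed.

Lemma exists_kernel_same_trace K :
  clique A C -> stable A K ->
  K \subset B' :|: (C :&: \bigcup_(1 <= j < #|C|.+1) Ks j) ->
  exists2 i, 1 <= i <= #|C|.+1 & K :&: C = Ks i :&: C.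
Proof.
move=> clC stK sK; have [disBC disB'C] := disjoint_cutset_sides.
have [KC0|[c /setIP[cK cC]]] := set_0Vmem (K :&: C).
  have sKs i : 1 <= i <= #|C|.+1 ->
      Ks i \subset B :|: (C :\: \bigcup_(1 <= j < i) Ks j) by case/kerKs.
  have [i range_i KiC0] := bigcup_nat_pigeonhole disBC sKs.
  by exists i; rewrite ?KC0 ?KiC0.
move: (subsetP sK c cK); rewrite !inE cC (disjointFl disB'C cC) /=.
case/bigcup_natP=> i /andP[i_gt0 lt_i] cKi.
have range_i : 1 <= i <= #|C|.+1 by rewrite i_gt0 ltnW.
have [_ stKi _] := kerKs range_i.
by exists i; rewrite // (stable_cliqueI stK clC cK cC) (stable_cliqueI stKi clC cKi cC).
Qed.

End CutsetSides.

End Kernels.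

Theorem lemma1 (T : finType) (A : rel T) (C B B' : {set T})
  (Ks : nat -> {set T}) (K : {set T}) :
  clique_cutset A C ->
  B :|: B' = ~: C -> [disjoint B & B'] ->
  component_of A (~: C) B ->
  (forall i, 1 <= i <= #|C|.+1 ->
     kernel_in A (B :|: (C :\: \bigcup_(1 <= j < i) Ks j)) (Ks i)) ->
  kernel_in A (B' :|: (C :&: \bigcup_(1 <= j < #|C|.+1) Ks j)) K ->
  exists2 i, 1 <= i <= #|C|.+1 & kernel A (K :|: Ks i).
Proof.
move=> [clC _] covB disBB' compB kerKs kerK.
have sepBB' b b' : b \in B -> b' \in B' -> ~~ adjacent A b b'.
  move=> bB b'B'; apply: component_not_adjacent compB bB _ (negbT (disjointFl disBB' b'B')).
  by rewrite -covB inE b'B' orbT.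
have [sK stK _] := kerK.
have [i range_i eqKC] := exists_kernel_same_trace covB kerKs clC stK sK.
have [sKi stKi _] := kerKs i range_i.
exists i => //; apply: kernel_setU kerK (kerKs i range_i) _ _.
  exact: cutset_sides_cover.
apply: stable_setU_separated sepBB' _ _ eqKC stK stKi.
- exact: subset_trans sK (setUS _ (subsetIl _ _)).
- exact: subset_trans sKi (setUS _ (subsetDl _ _)).
Qed.
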